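(* Let $S$ be either $\mathcal{PI}^{\ast}_X$ or $\overline{\mathcal{PI}^{\ast}}_X$ and let $a,b\in S$. Then: (1) $a\mathcal{R}b$ iff $\mathrm{dom}(a)=\mathrm{dom}(b)$; (2) $a\mathcal{L}b$ iff $\mathrm{ran}(a)=\mathrm{ran}(b)$; (3) $a\mathcal{D}b$ iff $a\mathcal{J}b$ iff $\mathrm{rank}(a)=\mathrm{rank}(b)$; (4) every ideal of $S$ has the form $J_\xi=\{\alpha\in S:\mathrm{rank}(\alpha)<\xi\}$ for some cardinal $\xi\le |X|^{+}$, where $|X|^{+}$ is the successor cardinal of $|X|$.
   Context: Let $X$ be a set and $X'=\{x':x\in X\}$ a disjoint copy of $X$. Let $P_X$ be the set of all partitions of $X\cup X'$ each of whose blocks is either a singleton (a point) or a generalised line, i.e. a subset meeting both $X$ and $X'$. Write $\alpha=\{A_i\cup B_i'\}_{i\in I}$ for the element whose generalised lines are the $A_i\cup B_i'$ ($A_i,B_i\subseteq X$ nonempty, the $A_i$ pairwise disjoint, the $B_i$ pairwise disjoint), all other elements being points. Set $\mathrm{rank}(\alpha)=|I|$, $\mathrm{dom}(\alpha)$ = the partition $\{A_i\}_{i\in I}$ of $\bigcup_i A_i$, and $\mathrm{ran}(\alpha)$ = the partition $\{B_i'\}_{i\in I}$ of $\bigcup_i B_i'$. Product $\star$: with $X''$ a third copy of $X$, regard $\alpha$ as a partition of $X\cup X''$ and $\beta$ as a partition of $X''\cup X'$ (identifying the bottom copy of $\alpha$ with the top copy of $\beta$ via $X''$), let $\sim$ be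 the equivalence relation on $X\cup X''\cup X'$ generated by the blocks of both; $\alpha\star\beta$ is the partition of $X\cup X'$ in which distinct $u,v$ are in one block iff $u\sim v$ and the $\sim$-class of $u$ contains no singleton block of $\alpha$ or of $\beta$. Product $\circ$: $\alpha\circ\beta$ has as generalised lines exactly the sets $A\cup D'$ with $A\cup B'$ a generalised line of $\alpha$ and $B\cup D'$ a generalised line of $\beta$ (same $B$), all other elements being points. $\mathcal{PI}^{\ast}_X=(P_X,\star)$, $\overline{\mathcal{PI}^{\ast}}_X=(P_X,\circ)$; $\mathcal{R},\mathcal{L},\mathcal{D},\mathcal{J}$ are Green's relations. *)

From HB Require Import structures.
From mathcomp Require Import all_boot.
From mathcomp Require Import boolp classical_sets cardinality.
From Stdlib Require Import Relations.

Set Implicit Arguments.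
Unset Strict Implicit.
Unset Printing Implicit Defensive.

Local Open Scope classical_set_scope.
Local Open Scope card_scope.

Section PartitionMonoids.
Variable X : Type.

(* X ∪ X' is modelled as X + X : inl x = x (top copy), inr x = x' (primed copy). *)
Definition pt := (X + X)%type.
Definition partition := set (set pt).

Definition top (B : set pt) : set X := [set x | B (inl x)].
Definition bot (B : set pt) : set X := [set x | B (inr x)].

Definition is_point (B : set pt) := exists p, B = [set p].
Definition is_line (B : set pt) := top B !=set0 /\ bot B !=set0.

Definition is_partition (P : partition) :=
  [/\ (forall B, P B -> B !=set0),
      (forall p, exists B, P B /\ B p) &
      (forall B C p, P B -> P C -> B p -> C p -> B = C)].

Definition PX (P : partition) :=
  is_partition P /\ (forall B, P B -> is_point B \/ is_line B).

Definition lines (a : partition) : set (set pt) := [set L | a L /\ is_line L].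
(* dom(a) = {A_i}, ran(a) = {B_i} (the B_i' read back in X) *)
Definition pdom (a : partition) : set (set X) := [set A | exists L, lines a L /\ A = top L].
Definition pran (a : partition) : set (set X) := [set B | exists L, lines a L /\ B = bot L].
(* rank(a) is the cardinality of lines a; rank comparisons are card_le / card_eq *)

Inductive lvl := Top | Mid | Bot.
Definition pt3 := (X * lvl)%type.
(* a is read as a partition of X ∪ X'', b as a partition of X'' ∪ X' *)
Definition embA (p : pt) : pt3 := match p with inl x => (x, Top) | inr x => (x, Mid) end.
Definition embB (p : pt) : pt3 := match p with inl x => (x, Mid) | inr x => (x, Bot) end.
Definition outP (p : pt) : pt3 := match p with inl x => (x, Top) | inr x => (x, Bot) end.

Definition gen_rel (a b : partition) : relation pt3 := fun u v =>
  (exists B, a B /\ exists p q, B p /\ B q /\ u = embA p /\ v = embA q) \/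
  (exists B, b B /\ exists p q, B p /\ B q /\ u = embB p /\ v = embB q).

Definition sim (a b : partition) : relation pt3 := clos_refl_sym_trans pt3 (gen_rel a b).

Definition class_has_point (a b : partition) (u : pt3) :=
  exists w, sim a b u w /\
    ((exists p, a [set p] /\ w = embA p) \/ (exists p, b [set p] /\ w = embB p)).

Definition star_rel (a b : partition) (u v : pt) :=
  u = v \/ (sim a b (outP u) (outP v) /\ ~ class_has_point a b (outP u)).

Definition pstar (a b : partition) : partition :=
  [set B | exists u, B = [set v | star_rel a b u v]].

Definition mkline (A D : set X) : set pt :=
  [set p | match p with inl x => A x | inr x => D x end].

Definition circ_lines (a b : partition) : set (set pt) :=
  [set L | exists L1 L2, lines a L1 /\ lines b L2 /\ bot L1 = top L2 /\
                         L = mkline (top L1) (bot L2)].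

Definition pcirc (a b : partition) : partition :=
  circ_lines a b `|`
  [set B | exists p, B = [set p] /\ (forall L, circ_lines a b L -> ~ L p)].

(* the two semigroups: c = false gives PI^*_X (product star), c = true its variant (product circ) *)
Definition PIop (c : bool) : partition -> partition -> partition :=
  if c then pcirc else pstar.

End PartitionMonoids.

Section Green.
Variables (T : Type) (S : set T) (op : T -> T -> T).

Definition rprinc (a : T) : set T := [set c | c = a \/ exists x, S x /\ c = op a x].
Definition lprinc (a : T) : set T := [set c | c = a \/ exists x, S x /\ c = op x a].
Definition jprinc (a : T) : set T :=
  [set c | c = a \/ (exists x, S x /\ c = op a x) \/ (exists x, S x /\ c = op x a) \/
           exists x y, S x /\ S y /\ c = op (op x a) y].

Definition GreenR (a b : T) := rprinc a = rprinc b.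
Definition GreenL (a b : T) := lprinc a = lprinc b.
Definition GreenJ (a b : T) := jprinc a = jprinc b.
Definition GreenD (a b : T) := exists c, S c /\ GreenR a c /\ GreenL c b.

(* two-sided ideal (the empty set is allowed; it is J_0) *)
Definition is_ideal (I : set T) :=
  I `<=` S /\ (forall a x, I a -> S x -> I (op a x) /\ I (op x a)).
End Green.

(* a cardinal |K| is below the successor cardinal |X|^+ iff every strictly
   smaller cardinal (realised by a subset of K) is at most |X| *)
Definition card_le_succ (T X : Type) (K : set T) :=
  forall A, A `<=` K -> (A #<= K) -> ~~ (K #<= A) -> A #<= [set: X].

Definition rank_lt (X T : Type) (a : partition X) (K : set T) :=
  (lines a #<= K) && ~~ (K #<= lines a).

From Pilot Require Import Defs.
From mathcomp Require Import all_boot.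
From mathcomp Require Import boolp classical_sets cardinality functions.
From Stdlib Require Import Relations.

Set Implicit Arguments.
Unset Strict Implicit.
Unset Printing Implicit Defensive.
Local Open Scope classical_set_scope.
Local Open Scope card_scope.

(** Both products shrink domains: dom (a x) is a subfamily of dom a for the
   product circ, and consists of unions of blocks of dom a for star.
   Conversely, every d whose domain lies below dom a in this sense is a x for
   an x built line by line, which identifies the principal right ideals and
   hence R; the anti-involution exchanging X and X' transfers this to L.
   Composing such solutions through an element with the domain of d and the
   range of some lines of a shows that the principal two-sided ideal of a is
   the set of elements of rank at most rank a, so D = J is equality of ranks
   and ideals are closed downwards under rank.  Cardinals being well ordered,
   an ideal is cut out by the least rank it misses, or by the least cardinal
   above |X| (which exists by Cantor) when it is everything. *)

Lemma card_le_of_inj T U (A : set T) (B : set U) (f : T -> U) :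
  set_fun A B f -> set_inj A f -> A #<= B.
Proof.
move=> fAB finj; apply: (@card_le_trans _ _ _ (f @` A)).
  by rewrite (card_le_eqr (inj_card_eq finj)).
exact/subset_card_le/image_subP.
Qed.

Section CardMin.
Variables (U : Type) (F : set (set U)).

(* Selectors of F that disagree at every member of F.  A maximal family of them
   exhausts some A0 in F; sending x in A0 to the value at A of the selector
   through x then injects A0 into every member A of F. *)
Definition separating_selectors (R : set (set U -> U)) :=
  (forall h, R h -> forall A, F A -> A (h A)) /\
  (forall h h', R h -> R h' -> forall A, F A -> h A = h' A -> h = h').

Lemma ex_maximal_separating : exists R, separating_selectors R /\
  forall R', R `<` R' -> ~ separating_selectors R'.
Proof.
apply: Zorn_bigcup => G Gsep Gchain; split.
  by move=> h [R GR Rh] A FA; exact: (Gsep R GR).1 h Rh A FA.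
move=> h h' [R1 G1 h1] [R2 G2 h2] A FA e.
have [s|s] := Gchain _ _ G1 G2.
  exact: (Gsep R2 G2).2 (s _ h1) h2 A FA e.
exact: (Gsep R1 G1).2 h1 (s _ h2) A FA e.
Qed.

Lemma exhausted_card_le R A0 : separating_selectors R -> F A0 ->
  (forall x, A0 x -> exists2 h, R h & h A0 = x) -> forall A, F A -> A0 #<= A.
Proof.
move=> [Rsel Rsep] FA0 A0cov A FA.
have /choice [g Hg] : forall x, exists h, A0 x -> R h /\ h A0 = x.
  move=> x; have [/A0cov [h Rh hx]|nA0x] := pselect (A0 x).
    by exists h => _; split.
  by exists (fun=> x) => /nA0x.
apply: (@card_le_of_inj _ _ _ _ (fun x => g x A)).
  by move=> x /Hg [Rg _]; exact: Rsel _ Rg A FA.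
move=> x y; rewrite !inE => /Hg [Rx gx] /Hg [Ry gy] e.
by rewrite -gx -gy (Rsep _ _ Rx Ry A FA e).
Qed.

Lemma maximal_separating_exhausts R : F !=set0 -> separating_selectors R ->
  (forall R', R `<` R' -> ~ separating_selectors R') ->
  exists2 A0, F A0 & forall x, A0 x -> exists2 h, R h & h A0 = x.
Proof.
move=> [A1 FA1] [Rsel Rsep] Rmax; apply: contrapT => noA0.
have fresh A : F A -> exists2 y, A y & forall h, R h -> h A <> y.
  move=> FA; apply: contrapT => nofresh; apply: noA0; exists A => // x Ax.
  apply: contrapT => nh; apply: nofresh; exists x => // h Rh hx.
  by apply: nh; exists h.
have [u0 _ _] := fresh A1 FA1.
have /choice [h0 Hh0] : forall A, exists y, F A -> A y /\ forall h, R h -> h A <> y.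
  move=> A; have [/fresh [y Ay Hy]|nFA] := pselect (F A).
    by exists y => _; split.
  by exists u0 => /nFA.
have Rlt : R `<` R `|` [set h0].
  split; first by move=> h Rh; left.
  move=> /(_ h0 (or_intror erefl)) Rh0.
  by have [_ /(_ h0 Rh0)] := Hh0 A1 FA1.
apply: (Rmax _ Rlt); split.
  by move=> h [Rh|->] A FA; [exact: Rsel h Rh A FA|exact: (Hh0 A FA).1].
move=> h h' [Rh|->] [Rh'|->] A FA e //.
- exact: Rsep Rh Rh' A FA e.
- by have [_ /(_ h Rh)] := Hh0 A FA.
- by have [_ /(_ h' Rh')] := Hh0 A FA; rewrite e.
Qed.

Lemma ex_card_min : F !=set0 -> exists2 K, F K & forall A, F A -> K #<= A.
Proof.
move=> F0; have [R [Rsep Rmax]] := ex_maximal_separating.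
have [A0 FA0 A0cov] := maximal_separating_exhausts F0 Rsep Rmax.
by exists A0 => //; exact: exhausted_card_le A0cov.
Qed.

End CardMin.

Lemma card_le_total T U (A : set T) (B : set U) : A #<= B \/ B #<= A.
Proof.
have eA : (@inl T U) @` A #= A by apply: inj_card_eq => x y _ _ [].
have eB : (@inr T U) @` B #= B by apply: inj_card_eq => x y _ _ [].
have [K [->|->] Kmin] :=
  @ex_card_min _ [set inl @` A; inr @` B] (ex_intro _ _ (or_introl erefl)).
  by left; have := Kmin _ (or_intror erefl); rewrite (card_le_eql eA) (card_le_eqr eB).
by right; have := Kmin _ (or_introl erefl); rewrite (card_le_eql eB) (card_le_eqr eA).
Qed.

Lemma Cantor_powerset T : ~ ([set: set T] #<= [set: T]).
Proof.
move=> /card_leP [g].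
pose f (A : set T) : T := val (g (SigSub (in_setT A))).
have finj : injective f.
  move=> A B /val_inj /(@inj _ _ _ g) e.
  by have /(congr1 val) := e (in_setT _) (in_setT _).
pose D := [set x | exists2 A, f A = x & ~ A x].
have [DfD|nDfD] := pselect (D (f D)).
  by have [A /finj AD] := DfD; rewrite AD; apply.
by apply: (nDfD); exists D.
Qed.

Section Families.
Variable T : Type.
Implicit Types P Q : set (set T).

Definition nonempty_disjoint P := (forall A, P A -> A !=set0) /\
  (forall A B z, P A -> P B -> A z -> B z -> A = B).

Definition coarser P Q :=
  forall A, P A -> forall z, A z -> exists2 A', Q A' & A' z /\ A' `<=` A.

(* The order on domains induced by the products: a circ x keeps some of the
   blocks of dom a, a star x glues blocks of dom a together. *)
Definition dom_le (c : bool) P Q := if c then P `<=` Q else coarser P Q.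

Lemma subset_coarser P Q : P `<=` Q -> coarser P Q.
Proof. by move=> PQ A PA z Az; exists A; [exact: PQ|split]. Qed.

Lemma coarser_refl P : coarser P P.
Proof. exact: subset_coarser. Qed.

Lemma coarser_subset P Q : nonempty_disjoint P -> coarser P Q -> coarser Q P ->
  P `<=` Q.
Proof.
move=> [Pn Pd] PQ QP A PA; have [z Az] := Pn A PA.
have [A' QA' [A'z A'A]] := PQ A PA z Az.
have [A'' PA'' [A''z A''A']] := QP A' QA' z A'z.
have A''A : A'' = A by apply: Pd PA'' PA A''z Az.
suff -> : A = A' by [].
by apply/seteqP; split => // w Aw; apply: A''A'; rewrite A''A.
Qed.

Lemma coarser_anti P Q : nonempty_disjoint P -> nonempty_disjoint Q ->
  coarser P Q -> coarser Q P -> P = Q.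
Proof. by move=> nP nQ PQ QP; apply/seteqP; split; apply: coarser_subset. Qed.

Lemma coarser_card_le P Q : nonempty_disjoint P -> coarser P Q -> P #<= Q.
Proof.
move=> [Pn Pd] PQ.
have /choice [g Hg] : forall A, exists A', P A -> [/\ Q A', A' `<=` A & A' !=set0].
  move=> A; have [PA|nPA] := pselect (P A); last by exists A => /nPA.
  have [z Az] := Pn A PA; have [A' QA' [A'z A'A]] := PQ A PA z Az.
  by exists A' => _; split => //; exists z.
apply: (@card_le_of_inj _ _ _ _ g); first by move=> A /Hg [].
move=> A1 A2; rewrite !inE => /[dup] P1 /Hg [_ s1 [z gz]] /[dup] P2 /Hg [_ s2 _] e.
by apply: Pd P1 P2 (s1 z gz) _; apply: s2; rewrite -e.
Qed.

Lemma nonempty_disjoint_card_le P : nonempty_disjoint P -> P #<= [set: T].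
Proof.
move=> [Pn Pd]; have [[t0 _]|noT] := pselect (exists t : T, True); last first.
  suff -> : P = set0 by [].
  by apply/seteqP; split => // A /Pn [z _]; apply: noT; exists z.
have /choice [g Hg] : forall A, exists z, P A -> A z.
  move=> A; have [/Pn [z Az]|nPA] := pselect (P A); first by exists z.
  by exists t0 => /nPA.
apply: (@card_le_of_inj _ _ _ _ g) => // A1 A2; rewrite !inE => P1 P2 e.
have gA2 : A2 (g A1) by rewrite e; exact: Hg _ P2.
exact: Pd P1 P2 (Hg _ P1) gA2.
Qed.

Lemma dom_le_refl c P : dom_le c P P.
Proof. by case: c => //=; exact: coarser_refl. Qed.

Lemma subset_dom_le c P Q : P `<=` Q -> dom_le c P Q.
Proof. by case: c => //= /subset_coarser. Qed.

Lemma dom_le_anti c P Q : nonempty_disjoint P -> nonempty_disjoint Q ->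
  dom_le c P Q -> dom_le c Q P -> P = Q.
Proof. by case: c => /=; [move=> _ _ PQ QP; apply/seteqP|exact: coarser_anti]. Qed.

Lemma dom_le_card_le c P Q : nonempty_disjoint P -> dom_le c P Q -> P #<= Q.
Proof. by move=> nP; case: c => /= [/subset_coarser|]; apply: coarser_card_le. Qed.

End Families.

Section Partitions.
Variable X : Type.
Implicit Types (a : Defs.partition X) (B C L : set (pt X)) (A D : set X).

Lemma mkline_top_bot L : mkline (top L) (bot L) = L.
Proof. by apply/predeqP => -[x|x]. Qed.

Lemma top_mkline A D : top (mkline A D) = A. Proof. by []. Qed.
Lemma bot_mkline A D : bot (mkline A D) = D. Proof. by []. Qed.

Lemma mkline_line A D : A !=set0 -> D !=set0 -> is_line (mkline A D).
Proof. by []. Qed.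

Lemma line_not_point L : is_line L -> ~ is_point L.
Proof. by move=> [[x Lx] [y Ly]] [p Lp]; move: Lx Ly; rewrite Lp /= => <-. Qed.

Lemma line_neq_set1 L p : is_line L -> L <> [set p].
Proof. by move=> /line_not_point Lnp Lp; apply: Lnp; exists p. Qed.

Section Blocks.
Variable a : Defs.partition X.
Hypothesis Pa : PX a.

Lemma PX_block_eq B C p : a B -> a C -> B p -> C p -> B = C.
Proof. by case: Pa => -[_ _ disj] _; apply: disj. Qed.

Lemma PX_cover p : exists2 B, a B & B p.
Proof. by case: Pa => -[_ cov _] _; have [B []] := cov p; exists B. Qed.

Lemma PX_block_neq0 B : a B -> B !=set0.
Proof. by case: Pa => -[ne _ _] _; apply: ne. Qed.

Lemma PX_point_or_line B : a B -> is_point B \/ is_line B.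
Proof. by case: Pa => _ pl; apply: pl. Qed.

Lemma PX_nonsingleton_line B p : a B -> B p -> ~ a [set p] -> is_line B.
Proof.
move=> aB Bp nap; have [[q Bq]|//] := PX_point_or_line aB.
by move: Bp aB; rewrite Bq /= => <- /nap.
Qed.

Lemma lines_top_eq L1 L2 x : lines a L1 -> lines a L2 -> top L1 x -> top L2 x ->
  L1 = L2.
Proof. by move=> [aL1 _] [aL2 _]; apply: PX_block_eq. Qed.

Lemma lines_bot_eq L1 L2 x : lines a L1 -> lines a L2 -> bot L1 x -> bot L2 x ->
  L1 = L2.
Proof. by move=> [aL1 _] [aL2 _]; apply: PX_block_eq. Qed.

End Blocks.

Definition line_family (F : set (set (pt X))) :=
  (forall L, F L -> is_line L) /\
  (forall L1 L2 p, F L1 -> F L2 -> L1 p -> L2 p -> L1 = L2).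

Definition completion (F : set (set (pt X))) : Defs.partition X :=
  F `|` [set B | exists p, B = [set p] /\ (forall L, F L -> ~ L p)].

Lemma PX_completion F : line_family F -> PX (completion F).
Proof.
move=> [Fl Fd]; split; last first.
  by move=> B [/Fl|[p [-> _]]]; [right|left; exists p].
split.
- by move=> B [/Fl [[x Lx] _]|[p [-> _]]]; [exists (inl x)|exists p].
- move=> p; have [[L [FL Lp]]|nL] := pselect (exists L, F L /\ L p).
    by exists L; split => //; left.
  exists [set p]; split => //; right; exists p; split => // L FL Lp.
  by apply: nL; exists L.
- move=> B C p [FB|[q [-> nq]]] [FC|[r [-> nr]]] Bp Cp.
  + exact: Fd FB FC Bp Cp.
  + by move: Cp nr => /= <- /(_ B FB).
  + by move: Bp nq => /= <- /(_ C FC).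
  + by move: Bp Cp => /= <- <-.
Qed.

Lemma lines_completion F : line_family F -> lines (completion F) = F.
Proof.
move=> [Fl _]; apply/predeqP => L; split; last by move=> FL; split; [left|exact: Fl].
by move=> [[//|[p [-> _]]] /line_not_point]; case; exists p.
Qed.

Lemma completion_lines a : PX a -> completion (lines a) = a.
Proof.
move=> Pa; apply/predeqP => B; split.
  move=> [[]//|[p [-> nL]]]; have [C aC Cp] := PX_cover Pa p.
  have [[q Cq]|lC] := PX_point_or_line Pa aC; last by have := nL C (conj aC lC).
  by move: Cp aC; rewrite Cq /= => ->.
move=> aB; have [[p Bp]|lB] := PX_point_or_line Pa aB; last by left.
right; exists p; split => // L [aL lL] Lp.
apply: (@line_neq_set1 L p lL); rewrite -Bp.
by apply: (PX_block_eq Pa aL aB Lp); rewrite Bp.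
Qed.

Lemma PX_lines_inj a b : PX a -> PX b -> lines a = lines b -> a = b.
Proof. by move=> Pa Pb E; rewrite -(completion_lines Pa) -(completion_lines Pb) E. Qed.

Section Ranks.
Variable a : Defs.partition X.
Hypothesis Pa : PX a.

Lemma nonempty_disjoint_pdom : nonempty_disjoint (pdom a).
Proof.
split; first by move=> A [L [[_ [Ln _]] ->]].
move=> A B z [L1 [l1 ->]] [L2 [l2 ->]] h1 h2.
by rewrite (lines_top_eq Pa l1 l2 h1 h2).
Qed.

Lemma nonempty_disjoint_pran : nonempty_disjoint (pran a).
Proof.
split; first by move=> A [L [[_ [_ Ln]] ->]].
move=> A B z [L1 [l1 ->]] [L2 [l2 ->]] h1 h2.
by rewrite (lines_bot_eq Pa l1 l2 h1 h2).
Qed.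

Lemma card_lines_pdom : lines a #= pdom a.
Proof.
have -> : pdom a = (@top X) @` lines a.
  by apply/predeqP => A; split => -[L]; [case=> lL ->|move=> lL <-]; exists L.
rewrite card_eq_sym; apply: inj_card_eq => L1 L2; rewrite !inE => l1 l2 e.
have [[z hz] _] := l1.2.
by apply: (lines_top_eq Pa l1 l2 hz); rewrite -e.
Qed.

Lemma card_lines_pran : lines a #= pran a.
Proof.
have -> : pran a = (@bot X) @` lines a.
  by apply/predeqP => A; split => -[L]; [case=> lL ->|move=> lL <-]; exists L.
rewrite card_eq_sym; apply: inj_card_eq => L1 L2; rewrite !inE => l1 l2 e.
have [_ [z hz]] := l1.2.
by apply: (lines_bot_eq Pa l1 l2 hz); rewrite -e.
Qed.

Lemma card_lines_le_setT : lines a #<= [set: X].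
Proof.
rewrite (card_le_eql card_lines_pdom).
exact: nonempty_disjoint_card_le nonempty_disjoint_pdom.
Qed.

End Ranks.

Lemma dom_le_card_lines c a b : PX a -> PX b -> dom_le c (pdom a) (pdom b) ->
  lines a #<= lines b.
Proof.
move=> Pa Pb ab; rewrite (card_le_eql (card_lines_pdom Pa)).
rewrite (card_le_eqr (card_lines_pdom Pb)).
exact: dom_le_card_le (nonempty_disjoint_pdom Pa) ab.
Qed.

Lemma ran_le_card_lines c a b : PX a -> PX b -> dom_le c (pran a) (pran b) ->
  lines a #<= lines b.
Proof.
move=> Pa Pb ab; rewrite (card_le_eql (card_lines_pran Pa)).
rewrite (card_le_eqr (card_lines_pran Pb)).
exact: dom_le_card_le (nonempty_disjoint_pran Pa) ab.
Qed.

End Partitions.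

Section Circ.
Variable X : Type.
Implicit Types (a b d : Defs.partition X).

Lemma line_family_circ a b : PX a -> PX b -> line_family (circ_lines a b).
Proof.
move=> Pa Pb; split.
  by move=> L [L1 [L2 [l1 [l2 [e ->]]]]]; apply: mkline_line; [exact: l1.2.1|exact: l2.2.2].
move=> L L' p [L1 [L2 [l1 [l2 [e ->]]]]] [L1' [L2' [l1' [l2' [e' ->]]]]].
case: p => [z|w] /= h h'.
  have E1 := lines_top_eq Pa l1 l1' h h'; subst L1'.
  have [[t ht] _] := l2.2; have ht' : top L2' t by rewrite -e' e.
  by rewrite (lines_top_eq Pb l2 l2' ht ht').
have E2 := lines_bot_eq Pb l2 l2' h h'; subst L2'.
have [_ [t ht]] := l1.2; have ht' : bot L1' t by rewrite e' -e.
by rewrite (lines_bot_eq Pa l1 l1' ht ht').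
Qed.

Lemma PX_pcirc a b : PX a -> PX b -> PX (pcirc a b).
Proof. by move=> Pa Pb; apply: PX_completion (line_family_circ Pa Pb). Qed.

Lemma lines_pcirc a b : PX a -> PX b -> lines (pcirc a b) = circ_lines a b.
Proof. by move=> Pa Pb; apply: lines_completion (line_family_circ Pa Pb). Qed.

Lemma pdom_pcirc a b : PX a -> PX b -> pdom (pcirc a b) `<=` pdom a.
Proof.
move=> Pa Pb A [L [+ ->]]; rewrite (lines_pcirc Pa Pb).
by move=> [L1 [L2 [l1 [l2 [e ->]]]]]; exists L1.
Qed.

Section CircSolve.
Variables a d : Defs.partition X.
Hypotheses (Pa : PX a) (Pd : PX d).

(* the x with a circ x = d: the line A_i u B_i' of a meeting the line A_i u D'
   of d gives the line B_i u D' of x *)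
Let F := [set L | exists L1 M, lines a L1 /\ lines d M /\ top L1 = top M /\
  L = mkline (bot L1) (bot M)].

Let line_family_F : line_family F.
Proof.
split.
  by move=> L [L1 [M [l1 [lM [e ->]]]]]; apply: mkline_line; [exact: l1.2.2|exact: lM.2.2].
move=> L L' p [L1 [M [l1 [lM [e ->]]]]] [L1' [M' [l1' [lM' [e' ->]]]]].
case: p => [z|w] /= h h'.
  have E1 := lines_bot_eq Pa l1 l1' h h'; subst L1'.
  have [[t ht] _] := lM.2; have ht' : top M' t by rewrite -e' e.
  by rewrite (lines_top_eq Pd lM lM' ht ht').
have E2 := lines_bot_eq Pd lM lM' h h'; subst M'.
have [[t ht] _] := l1.2; have ht' : top L1' t by rewrite e' -e.
by rewrite (lines_top_eq Pa l1 l1' ht ht').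
Qed.

Lemma pcirc_solve : pdom d `<=` pdom a -> exists2 x, PX x & pcirc a x = d.
Proof.
move=> dda; have Px := PX_completion line_family_F.
exists (completion F) => //; apply: PX_lines_inj (PX_pcirc Pa Px) Pd _.
rewrite (lines_pcirc Pa Px); apply/predeqP => L; split.
  move=> [L1 [L2 [l1 [+ [e ->]]]]]; rewrite (lines_completion line_family_F).
  move=> [K1 [M [k1 [lM [eKM EL2]]]]].
  rewrite EL2 top_mkline in e; rewrite EL2 bot_mkline.
  have [_ [t ht]] := l1.2; have ht' : bot K1 t by rewrite -e.
  have E := lines_bot_eq Pa l1 k1 ht ht'; subst K1.
  by rewrite eKM mkline_top_bot.
move=> lM; have [L1 [l1 e]] : pdom a (top L) by apply: dda; exists L.
exists L1, (mkline (bot L1) (bot L)); split => //; split.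
  by rewrite (lines_completion line_family_F); exists L1, L.
by rewrite top_mkline bot_mkline -e mkline_top_bot.
Qed.

End CircSolve.
End Circ.

Section Star.
Variable X : Type.
Variables a b : Defs.partition X.
Local Notation sim := (sim a b).
Local Notation chp := (class_has_point a b).
Local Notation star := (star_rel a b).

Lemma sim_refl u : sim u u. Proof. exact: rst_refl. Qed.
Lemma sim_sym u v : sim u v -> sim v u. Proof. exact: rst_sym. Qed.
Lemma sim_trans u v w : sim u v -> sim v w -> sim u w. Proof. exact: rst_trans. Qed.
Lemma sim_step u v : gen_rel a b u v -> sim u v. Proof. exact: rst_step. Qed.

Lemma gen_rel_sym u v : gen_rel a b u v -> gen_rel a b v u.
Proof.
by case=> -[B [abB [p [q [Bp [Bq [-> ->]]]]]]]; [left|right];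
  exists B; split => //; exists q, p.
Qed.

Lemma sim_invariant (Z : pt3 X -> Prop) :
  (forall u v, gen_rel a b u v -> Z u -> Z v) -> forall u v, sim u v -> Z u -> Z v.
Proof.
move=> HZ u v suv; suff : Z u <-> Z v by case.
elim: suv => [x y /[dup] g /gen_rel_sym g'|x|x y _ [h1 h2]|x y z _ [h1 h2] _ [h3 h4]].
- by split; apply: HZ.
- by [].
- by split.
- by split => ?; [apply: h3; apply: h1|apply: h2; apply: h4].
Qed.

Lemma sim_class_has_point u v : sim u v -> chp v -> chp u.
Proof. by move=> suv [w [svw pw]]; exists w; split => //; exact: sim_trans suv svw. Qed.

Lemma class_has_pointA p : a [set p] -> chp (embA p).
Proof. by exists (embA p); split; [exact: sim_refl|left; exists p]. Qed.

Lemma class_has_pointB p : b [set p] -> chp (embB p).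
Proof. by exists (embB p); split; [exact: sim_refl|right; exists p]. Qed.

Lemma star_sim u v : star u v -> sim (outP u) (outP v).
Proof. by case=> [->|[]//]; exact: sim_refl. Qed.

Lemma star_refl u : star u u. Proof. by left. Qed.

Lemma star_sym u v : star u v -> star v u.
Proof.
case=> [->|[s nc]]; first exact: star_refl.
right; split; first exact: sim_sym.
by move=> c; apply/nc/(sim_class_has_point s).
Qed.

Lemma star_trans u v w : star u v -> star v w -> star u w.
Proof.
case=> [->//|[s1 nc]] [<-|[s2 _]]; first by right.
by right; split => //; exact: sim_trans s1 s2.
Qed.

Lemma star_class_eq u u' : star u u' -> [set v | star u v] = [set v | star u' v].
Proof.
move=> s; apply/predeqP => v; split; first exact/star_trans/star_sym.
exact: star_trans.
Qed.

Lemma star_class_point u : chp (outP u) -> [set v | star u v] = [set u].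
Proof.
move=> c; apply/predeqP => v; split => [[->//|[_ /(_ c)]]//|/= ->].
exact: star_refl.
Qed.

Hypotheses (Pa : PX a) (Pb : PX b).

(* a ~-class without points runs through lines of a and b alternately, so it
   reaches both X and X' *)
Lemma sim_top_bot x : ~ chp (x, Top) -> exists y, sim (x, Top) (y, Bot).
Proof.
move=> nc; have [B aB Bx] := PX_cover Pa (inl x).
have nax : ~ a [set inl x] by move/class_has_pointA.
have [_ [z Bz]] := PX_nonsingleton_line Pa aB Bx nax.
have xz : sim (x, Top) (z, Mid).
  by apply: sim_step; left; exists B; split => //; exists (inl x), (inr z).
have [C bC Cz] := PX_cover Pb (inl z).
have nbz : ~ b [set inl z] by move/class_has_pointB/(sim_class_has_point xz).
have [_ [y Cy]] := PX_nonsingleton_line Pb bC Cz nbz.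
exists y; apply: sim_trans xz (sim_step _).
by right; exists C; split => //; exists (inl z), (inr y).
Qed.

Lemma sim_bot_top y : ~ chp (y, Bot) -> exists x, sim (y, Bot) (x, Top).
Proof.
move=> nc; have [C bC Cy] := PX_cover Pb (inr y).
have nby : ~ b [set inr y] by move/class_has_pointB.
have [[z Cz] _] := PX_nonsingleton_line Pb bC Cy nby.
have yz : sim (y, Bot) (z, Mid).
  by apply: sim_step; right; exists C; split => //; exists (inr y), (inl z).
have [B aB Bz] := PX_cover Pa (inr z).
have naz : ~ a [set inr z] by move/class_has_pointA/(sim_class_has_point yz).
have [[x Bx] _] := PX_nonsingleton_line Pa aB Bz naz.
exists x; apply: sim_trans yz (sim_step _).
by left; exists B; split => //; exists (inr z), (inl x).
Qed.

Lemma PX_pstar : PX (pstar a b).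
Proof.
split; first split.
- by move=> B [u ->]; exists u; apply: star_refl.
- by move=> p; exists [set v | star p v]; split; [exists p|apply: star_refl].
- move=> B C p [u ->] [u' ->] up u'p.
  exact/star_class_eq/(star_trans up)/star_sym.
move=> B [u ->]; have [c|nc] := pselect (chp (outP u)).
  by left; exists u; exact: star_class_point.
right; case: u nc => [x|y] /= nc.
  have [y s] := sim_top_bot nc.
  by split; [exists x; apply: star_refl|exists y; right].
have [x s] := sim_bot_top nc.
by split; [exists x; right|exists y; apply: star_refl].
Qed.

Lemma pdom_pstar : coarser (pdom (pstar a b)) (pdom a).
Proof.
move=> A [L [[[u EL] lL] ->]] z; rewrite EL => /= uz.
have nc : ~ chp (outP u).
  by move/star_class_point => Lu; apply: (line_not_point lL); exists u; rewrite EL.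
have s := star_sim uz.
have [B aB Bz] := PX_cover Pa (inl z).
have naz : ~ a [set inl z] by move/class_has_pointA/(sim_class_has_point s).
have lB := PX_nonsingleton_line Pa aB Bz naz.
exists (top B); first by exists B.
split => // z' Bz' /=; right; split => //.
apply: sim_trans s (sim_step _).
by left; exists B; split => //; exists (inl z), (inl z').
Qed.

End Star.

Section StarSolve.
Variable X : Type.
Variables a d : Defs.partition X.
Hypotheses (Pa : PX a) (Pd : PX d) (dda : coarser (pdom d) (pdom a)).

(* The solution x of a star x = d has one line [U M u (bot M)'] for each line
   M of d, where U M collects the bottoms of the lines of a lying below M. *)
Let U (M : set (pt X)) : set X :=
  [set y | exists L, lines a L /\ top L `<=` top M /\ bot L y].
Let lineU M := mkline (U M) (bot M).
Let F := [set N | exists2 M, lines d M & N = lineU M].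

Let a_line_below M z : lines d M -> top M z ->
  exists L, [/\ lines a L, L (inl z) & top L `<=` top M].
Proof.
move=> lM Mz; have [_ [L [lL ->]] [Lz LM]] := dda (ex_intro _ M (conj lM erefl)) Mz.
by exists L.
Qed.

Let U_neq0 M : lines d M -> U M !=set0.
Proof.
move=> lM; have [[z Mz] _] := lM.2; have [L [lL _ LM]] := a_line_below lM Mz.
by have [_ [y Ly]] := lL.2; exists y, L.
Qed.

Let line_family_F : line_family F.
Proof.
split; first by move=> N [M lM ->]; apply: mkline_line; [exact: U_neq0|exact: lM.2.2].
move=> N N' p [M lM ->] [M' lM' ->]; case: p => [y|w] /= h h'; last first.
  by rewrite (lines_bot_eq Pd lM lM' h h').
have [L [lL [LM Ly]]] := h; have [L' [lL' [LM' L'y]]] := h'.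
have E := lines_bot_eq Pa lL lL' Ly L'y; subst L'.
have [[t Lt] _] := lL.2.
by rewrite (lines_top_eq Pd lM lM' (LM t Lt) (LM' t Lt)).
Qed.

Let x := completion F.
Let Px : PX x := PX_completion line_family_F.

Let x_lineU M : lines d M -> x (lineU M).
Proof. by move=> lM; left; exists M. Qed.

Let star_class_point_d u : d [set u] -> [set v | star_rel a x u v] = [set u].
Proof.
move=> du; apply: star_class_point.
have not_in_lineU M : lines d M -> ~ M u.
  by move=> lM Mu; apply: (line_neq_set1 lM.2); exact: (PX_block_eq Pd lM.1 du Mu).
case: u du not_in_lineU => [z|w] du not_in_lineU; last first.
  apply: (class_has_pointB a (p := inr w)); right; exists (inr w); split => // N [M lM ->].
  exact: (not_in_lineU M lM).
have [az|naz] := pselect (a [set inl z]); first exact: (class_has_pointA x az).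
have [B aB Bz] := PX_cover Pa (inl z).
have lB := PX_nonsingleton_line Pa aB Bz naz; have [_ [y By]] := lB.
have xy : x [set inl y].
  right; exists (inl y); split => // N [M lM ->] [L [lL [LM Ly]]].
  have E := lines_bot_eq Pa lL (conj aB lB) Ly By; subst L.
  exact: not_in_lineU lM (LM z Bz).
apply: sim_class_has_point (class_has_pointB a xy).
by apply: sim_step; left; exists B; split => //; exists (inl z), (inr y).
Qed.

Section LineClass.
Variable M : set (pt X).
Hypothesis lM : lines d M.

(* the ~-class of the points of M, level by level *)
Let inM (w : pt3 X) := match w with
  | (z, Top) => top M z | (y, Mid) => U M y | (t, Bot) => bot M t end.

Let a_block_inM B p : a B -> B p -> inM (embA p) -> lines a B /\ top B `<=` top M.
Proof.
move: p => [z|y] aB Bp /=.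
  by move=> /(a_line_below lM) [L [lL Lz LM]]; rewrite (PX_block_eq Pa aB lL.1 Bp Lz).
by move=> [L [lL [LM Ly]]]; rewrite (PX_block_eq Pa aB lL.1 Bp Ly).
Qed.

Let x_block_inM C p : x C -> C p -> inM (embB p) -> C = lineU M.
Proof.
by move=> xC Cp Mp; apply: (PX_block_eq Px xC (x_lineU lM) Cp); case: p {Cp} Mp.
Qed.

Let inM_closed u v : gen_rel a x u v -> inM u -> inM v.
Proof.
case=> -[B [abB [p [q [Bp [Bq [-> ->]]]]]]] Mp.
  have [lB BM] := a_block_inM abB Bp Mp.
  by case: q Bq => [z|y] Bq /=; [exact: BM|exists B].
by move: Bq; rewrite (x_block_inM abB Bp Mp); case: q.
Qed.

Let sim_inM u w : M u -> sim a x (outP u) w -> inM w.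
Proof. by move=> Mu /(sim_invariant inM_closed); apply; case: u Mu. Qed.

Let sim_lineU v : M v -> exists2 y, U M y & sim a x (outP v) (y, Mid).
Proof.
case: v => [z|w] Mv.
  have [L [lL Lz LM]] := a_line_below lM Mv; have [_ [y Ly]] := lL.2.
  exists y; first by exists L.
  by apply: sim_step; left; exists L; split; [exact: lL.1|exists (inl z), (inr y)].
have [y Uy] := U_neq0 lM; exists y => //.
by apply: sim_step; right; exists (lineU M); split; [exact: x_lineU|exists (inr w), (inl y)].
Qed.

Lemma star_class_line u : M u -> [set v | star_rel a x u v] = M.
Proof.
move=> Mu; apply/predeqP => v; split.
  by case=> [<-//|[/(sim_inM Mu)]]; case: v.
move=> Mv; right; split.
  have [y1 Uy1 s1] := sim_lineU Mu; have [y2 Uy2 s2] := sim_lineU Mv.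
  apply: sim_trans s1 (sim_trans _ (sim_sym s2)); apply: sim_step.
  by right; exists (lineU M); split; [exact: x_lineU|exists (inl y1), (inl y2)].
move=> [w [/(sim_inM Mu) Mw [[p [ap Ew]]|[p [xp Ew]]]]]; subst w.
  have [lp _] := a_block_inM ap erefl Mw.
  exact: line_neq_set1 lp.2 erefl.
have /esym := x_block_inM xp erefl Mw.
by apply: line_neq_set1; apply: (line_family_F.1); exists M.
Qed.

End LineClass.

Let star_class_d u B : d B -> B u -> [set v | star_rel a x u v] = B.
Proof.
move=> dB Bu; have [[p Bp]|lB] := PX_point_or_line Pd dB.
  by move: Bu dB; rewrite Bp /= => -> /star_class_point_d.
exact: (@star_class_line B (conj dB lB) u Bu).
Qed.

Lemma pstar_solve : exists2 x, PX x & pstar a x = d.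
Proof.
exists x => //; apply/predeqP => B; split.
  by move=> [u ->]; have [B' dB' B'u] := PX_cover Pd u; rewrite (star_class_d dB' B'u).
move=> dB; have [u Bu] := PX_block_neq0 Pd dB.
by exists u; rewrite (star_class_d dB Bu).
Qed.

End StarSolve.

Section Swap.
Variable X : Type.
Implicit Types (a b : Defs.partition X) (B L : set (pt X)).

Definition swap_pt (p : pt X) : pt X :=
  match p with inl x => inr x | inr x => inl x end.
Definition swap_block B : set (pt X) := [set p | B (swap_pt p)].
Definition pswap a : Defs.partition X := [set B | a (swap_block B)].
Definition swap_pt3 (w : pt3 X) : pt3 X :=
  (w.1, match w.2 with Top => Bot | Mid => Mid | Bot => Top end).

Lemma swap_ptK : involutive swap_pt. Proof. by case. Qed.

Lemma swap_blockK : involutive swap_block.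
Proof. by move=> B; apply/predeqP => p; rewrite /swap_block /= swap_ptK. Qed.

Lemma pswapK : involutive pswap.
Proof. by move=> a; apply/predeqP => B; rewrite /pswap /= swap_blockK. Qed.

Lemma swap_pt3K : involutive swap_pt3. Proof. by case=> ? []. Qed.

Lemma swap_block_set1 p : swap_block [set p] = [set swap_pt p].
Proof.
apply/predeqP => q; rewrite /swap_block /=.
by split => [<-|->]; rewrite swap_ptK.
Qed.

Lemma pswap_set1 a p : pswap a [set p] = a [set swap_pt p].
Proof. by rewrite /pswap /= swap_block_set1. Qed.


Lemma swap_block_mkline A D : swap_block (mkline A D) = mkline D A.
Proof. by apply/predeqP => -[]. Qed.

Lemma is_line_swap_block B : is_line (swap_block B) <-> is_line B.
Proof. by split => -[]. Qed.

Lemma lines_pswap a L : lines (pswap a) L <-> lines a (swap_block L).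
Proof. by split => -[aL lL]; split => //; move: lL; rewrite is_line_swap_block. Qed.

Lemma pdom_pswap a : pdom (pswap a) = pran a.
Proof.
apply/predeqP => A; split; first by move=> [L [/lines_pswap lL ->]]; exists (swap_block L).
move=> [L [lL ->]]; exists (swap_block L); split => //.
by apply/lines_pswap; rewrite swap_blockK.
Qed.

Lemma PX_pswap a : PX a -> PX (pswap a).
Proof.
move=> Pa; split; first split.
- by move=> B /(PX_block_neq0 Pa) [p Bp]; exists (swap_pt p).
- move=> p; have [C aC Cp] := PX_cover Pa (swap_pt p).
  by exists (swap_block C); rewrite /pswap /= swap_blockK.
- move=> B C p aB aC Bp Cp; rewrite -(swap_blockK B) -(swap_blockK C); congr swap_block.
  by apply: (PX_block_eq Pa aB aC (p := swap_pt p)); rewrite /swap_block /= swap_ptK.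
move=> B aB; have [[q Bq]|lB] := PX_point_or_line Pa aB.
  by left; exists (swap_pt q); rewrite -(swap_blockK B) Bq swap_block_set1.
by right; apply/is_line_swap_block.
Qed.

Lemma circ_lines_pswap a b L :
  circ_lines (pswap a) (pswap b) L <-> circ_lines b a (swap_block L).
Proof.
split.
  move=> [L1 [L2 [/lines_pswap l1 [/lines_pswap l2 [e ->]]]]].
  exists (swap_block L2), (swap_block L1); do 3!split => //.
  by rewrite swap_block_mkline.
move=> [K1 [K2 [l1 [l2 [e E]]]]].
exists (swap_block K2), (swap_block K1).
split; first by apply/lines_pswap; rewrite swap_blockK.
split; first by apply/lines_pswap; rewrite swap_blockK.
by split => //; rewrite -(swap_blockK L) E swap_block_mkline.
Qed.

Lemma pcirc_pswap a b : PX a -> PX b ->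
  pcirc (pswap a) (pswap b) = pswap (pcirc b a).
Proof.
move=> Pa Pb; have Psa := PX_pswap Pa; have Psb := PX_pswap Pb.
apply: PX_lines_inj; [exact: PX_pcirc|exact/PX_pswap/PX_pcirc|].
apply/predeqP => L; rewrite (lines_pcirc Psa Psb) lines_pswap (lines_pcirc Pb Pa).
exact: circ_lines_pswap.
Qed.

Lemma swap_embA p : swap_pt3 (embA p) = embB (swap_pt p). Proof. by case: p. Qed.
Lemma swap_embB p : swap_pt3 (embB p) = embA (swap_pt p). Proof. by case: p. Qed.
Lemma swap_outP p : swap_pt3 (outP p) = outP (swap_pt p). Proof. by case: p. Qed.

Lemma gen_rel_pswap a b u v :
  gen_rel (pswap a) (pswap b) u v -> gen_rel b a (swap_pt3 u) (swap_pt3 v).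
Proof.
case=> -[B [abB [p [q [Bp [Bq [-> ->]]]]]]]; [right|left];
  exists (swap_block B); split => //; exists (swap_pt p), (swap_pt q);
  by rewrite /swap_block /= !swap_ptK ?swap_embA ?swap_embB.
Qed.

Lemma crst_map T (R R' : relation T) (f : T -> T) :
  (forall u v, R u v -> R' (f u) (f v)) ->
  forall u v, clos_refl_sym_trans T R u v -> clos_refl_sym_trans T R' (f u) (f v).
Proof.
move=> H u v; elim => [x y /H|x|x y _|x y z _ h1 _ h2].
- exact: rst_step.
- exact: rst_refl.
- exact: rst_sym.
- exact: rst_trans h1 h2.
Qed.

Lemma sim_pswap a b u v :
  sim (pswap a) (pswap b) u v <-> sim b a (swap_pt3 u) (swap_pt3 v).
Proof.
split; first exact/crst_map/gen_rel_pswap.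
rewrite -{2}(swap_pt3K u) -{2}(swap_pt3K v) -{1}(pswapK a) -{1}(pswapK b).
exact/crst_map/gen_rel_pswap.
Qed.

Lemma class_has_point_pswap_swap a b u :
  class_has_point (pswap a) (pswap b) u -> class_has_point b a (swap_pt3 u).
Proof.
move=> [w [/sim_pswap s pw]]; exists (swap_pt3 w); split => //.
case: pw => -[p [cp ->]]; [right|left]; exists (swap_pt p);
  by rewrite -pswap_set1 ?swap_embA ?swap_embB.
Qed.

Lemma class_has_point_pswap a b u :
  class_has_point (pswap a) (pswap b) u <-> class_has_point b a (swap_pt3 u).
Proof.
split; first exact: class_has_point_pswap_swap.
rewrite -{1}(pswapK a) -{1}(pswapK b) -{2}(swap_pt3K u).
exact: class_has_point_pswap_swap.
Qed.

Lemma star_rel_pswap a b u v :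
  star_rel (pswap a) (pswap b) u v <-> star_rel b a (swap_pt u) (swap_pt v).
Proof.
rewrite /star_rel sim_pswap class_has_point_pswap !swap_outP.
by split => -[E|h]; [left; rewrite E|right|left; rewrite -(swap_ptK u) E swap_ptK|right].
Qed.

Lemma pstar_pswap a b : pstar (pswap a) (pswap b) = pswap (pstar b a).
Proof.
apply/predeqP => B; rewrite /pswap /=; split.
  move=> [u ->]; exists (swap_pt u); apply/predeqP => v.
  by rewrite /swap_block /= star_rel_pswap swap_ptK.
move=> [u E]; exists (swap_pt u); rewrite -(swap_blockK B) E; apply/predeqP => v.
by rewrite /swap_block /= star_rel_pswap swap_ptK.
Qed.

End Swap.

Section Op.
Variable X : Type.
Variable c : bool.
Implicit Types (a b d e : Defs.partition X).
Local Notation op := (@PIop X c).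

Lemma PX_op a b : PX a -> PX b -> PX (op a b).
Proof. by case: c => /= Pa Pb; [exact: PX_pcirc|exact: PX_pstar]. Qed.

Lemma op_pswap a b : PX a -> PX b -> op (pswap a) (pswap b) = pswap (op b a).
Proof. by case: c => /= Pa Pb; [exact: pcirc_pswap|exact: pstar_pswap]. Qed.

Lemma pdom_op a b : PX a -> PX b -> dom_le c (pdom (op a b)) (pdom a).
Proof. by case: c => /= Pa Pb; [exact: pdom_pcirc|exact: pdom_pstar]. Qed.

Lemma op_solve a d : PX a -> PX d -> dom_le c (pdom d) (pdom a) ->
  exists2 x, PX x & op a x = d.
Proof. by case: c => /= Pa Pd da; [exact: pcirc_solve|exact: pstar_solve]. Qed.

Lemma pran_op a b : PX a -> PX b -> dom_le c (pran (op b a)) (pran a).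
Proof.
move=> Pa Pb; rewrite -pdom_pswap -op_pswap // -(pdom_pswap a).
by apply: pdom_op; apply: PX_pswap.
Qed.

Lemma op_solve_l a d : PX a -> PX d -> dom_le c (pran d) (pran a) ->
  exists2 x, PX x & op x a = d.
Proof.
move=> Pa Pd da; have Psa := PX_pswap Pa.
have [x' Px' E] : exists2 x', PX x' & op (pswap a) x' = pswap d.
  by apply: op_solve; rewrite ?pdom_pswap //; apply: PX_pswap.
exists (pswap x'); first exact: PX_pswap.
by rewrite -{1}(pswapK a) (op_pswap Px' Psa) E pswapK.
Qed.

Lemma card_lines_op_l a b : PX a -> PX b -> lines (op a b) #<= lines a.
Proof. by move=> Pa Pb; apply: dom_le_card_lines (PX_op Pa Pb) Pa (pdom_op Pa Pb). Qed.

Lemma card_lines_op_r a b : PX a -> PX b -> lines (op b a) #<= lines a.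
Proof. by move=> Pa Pb; apply: ran_le_card_lines (PX_op Pb Pa) Pa (pran_op Pa Pb). Qed.

Lemma rprinc_PX a : PX a ->
  rprinc (@PX X) op a = [set d | PX d /\ dom_le c (pdom d) (pdom a)].
Proof.
move=> Pa; apply/predeqP => d; split.
  case=> [->|[x [Px ->]]]; first by split => //; apply: dom_le_refl.
  by split; [exact: PX_op|exact: pdom_op].
by move=> [Pd /(op_solve Pa Pd) [x Px <-]]; right; exists x.
Qed.

Lemma lprinc_PX a : PX a ->
  lprinc (@PX X) op a = [set d | PX d /\ dom_le c (pran d) (pran a)].
Proof.
move=> Pa; apply/predeqP => d; split.
  case=> [->|[x [Px ->]]]; first by split => //; apply: dom_le_refl.
  by split; [exact: PX_op|exact: pran_op].
by move=> [Pd /(op_solve_l Pa Pd) [x Px <-]]; right; exists x.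
Qed.

(* e R d, and ran e is a subfamily of ran a: e lies in the left ideal of a *)
Lemma ex_dom_ran_inj a d (f : set (pt X) -> set (pt X)) : PX a -> PX d ->
  set_fun (lines d) (lines a) f -> set_inj (lines d) f ->
  exists2 e, PX e & pdom e = pdom d /\
    pran e = [set B | exists M, lines d M /\ B = bot (f M)].
Proof.
move=> Pa Pd fl finj.
pose G := [set N | exists M, lines d M /\ N = mkline (top M) (bot (f M))].
have lG : line_family G.
  split.
    by move=> N [M [lM ->]]; apply: mkline_line; [exact: lM.2.1|exact: (fl M lM).2.2].
  move=> N N' p [M [lM ->]] [M' [lM' ->]]; case: p => [z|w] /= h h'.
    by rewrite (lines_top_eq Pd lM lM' h h').
  have E := lines_bot_eq Pa (fl M lM) (fl M' lM') h h'.
  by rewrite (finj M M' (mem_set lM) (mem_set lM') E).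
exists (completion G); first exact: PX_completion.
split; apply/predeqP => A; rewrite /pdom /pran (lines_completion lG); split.
- by move=> [N [[M [lM ->]] ->]]; exists M.
- by move=> [M [lM ->]]; exists (mkline (top M) (bot (f M))); split => //; exists M.
- by move=> [N [[M [lM ->]] ->]]; exists M.
- by move=> [M [lM ->]]; exists (mkline (top M) (bot (f M))); split => //; exists M.
Qed.

Lemma jprinc_PX a : PX a ->
  jprinc (@PX X) op a = [set d | PX d /\ lines d #<= lines a].
Proof.
move=> Pa; apply/predeqP => d; split.
  case=> [->|[[x [Px ->]]|[[x [Px ->]]|[x [y [Px [Py ->]]]]]]].
  - by split.
  - by split; [exact: PX_op|exact: card_lines_op_l].
  - by split; [exact: PX_op|exact: card_lines_op_r].
  - split; first by apply: PX_op => //; apply: PX_op.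
    exact: card_le_trans (card_lines_op_l (PX_op Px Pa) Py) (card_lines_op_r Pa Px).
move=> [Pd /pcard_leP/injfunPex [f fl finj]]; right; right; right.
have [e Pe [de re]] := ex_dom_ran_inj Pa Pd fl finj.
have [x Px xae] : exists2 x, PX x & op x a = e.
  apply: op_solve_l => //; apply: subset_dom_le; rewrite re.
  by move=> B [M [lM ->]]; exists (f M); split => //; apply: fl.
have [y Py eyd] : exists2 y, PX y & op e y = d.
  by apply: op_solve => //; rewrite de; apply: dom_le_refl.
by exists x, y; rewrite xae eyd.
Qed.

End Op.

Section Green.
Variable X : Type.
Variable c : bool.
Implicit Types (a b d : Defs.partition X) (I : set (Defs.partition X)).
Local Notation S := (@PX X).
Local Notation op := (@PIop X c).

Lemma GreenR_PX a b : PX a -> PX b -> GreenR S op a b <-> pdom a = pdom b.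
Proof.
move=> Pa Pb; rewrite /GreenR (rprinc_PX c Pa) (rprinc_PX c Pb); split=> [E|->//].
have [_ ab] : [set d | PX d /\ dom_le c (pdom d) (pdom b)] a.
  by rewrite -E; split => //; apply: dom_le_refl.
have [_ ba] : [set d | PX d /\ dom_le c (pdom d) (pdom a)] b.
  by rewrite E; split => //; apply: dom_le_refl.
exact: dom_le_anti (nonempty_disjoint_pdom Pa) (nonempty_disjoint_pdom Pb) ab ba.
Qed.

Lemma GreenL_PX a b : PX a -> PX b -> GreenL S op a b <-> pran a = pran b.
Proof.
move=> Pa Pb; rewrite /GreenL (lprinc_PX c Pa) (lprinc_PX c Pb); split=> [E|->//].
have [_ ab] : [set d | PX d /\ dom_le c (pran d) (pran b)] a.
  by rewrite -E; split => //; apply: dom_le_refl.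
have [_ ba] : [set d | PX d /\ dom_le c (pran d) (pran a)] b.
  by rewrite E; split => //; apply: dom_le_refl.
exact: dom_le_anti (nonempty_disjoint_pran Pa) (nonempty_disjoint_pran Pb) ab ba.
Qed.

Lemma GreenJ_PX a b : PX a -> PX b -> GreenJ S op a b <-> lines a #= lines b.
Proof.
move=> Pa Pb; rewrite /GreenJ (jprinc_PX c Pa) (jprinc_PX c Pb) card_eq_le; split.
  move=> E; apply/andP; split.
    by have [] : [set d | PX d /\ lines d #<= lines b] a by rewrite -E; split.
  by have [] : [set d | PX d /\ lines d #<= lines a] b by rewrite E; split.
move=> /andP [ab ba]; apply/predeqP => d; split => -[Pd da]; split => //.
  exact: card_le_trans da ab.
exact: card_le_trans da ba.
Qed.

Lemma GreenD_PX a b : PX a -> PX b -> GreenD S op a b <-> lines a #= lines b.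
Proof.
move=> Pa Pb; split.
  move=> [e [Pe [/(GreenR_PX Pa Pe) ae /(GreenL_PX Pe Pb) eb]]].
  apply: card_eq_trans (card_lines_pdom Pa) _; rewrite ae.
  apply: card_eq_trans (card_esym (card_lines_pdom Pe)) _.
  apply: card_eq_trans (card_lines_pran Pe) _; rewrite eb.
  exact: card_esym (card_lines_pran Pb).
move=> /card_set_bijP [f [fl finj fsurj]].
have [e Pe [ae eb]] := ex_dom_ran_inj Pb Pa fl finj.
exists e; split => //; split; first exact/(GreenR_PX Pa Pe).
apply/(GreenL_PX Pe Pb); rewrite eb; apply/predeqP => B; split.
  by move=> [M [lM ->]]; exists (f M); split => //; apply: fl.
by move=> [L [/fsurj [M lM <-] ->]]; exists M.
Qed.

Lemma ideal_card_lines_closed I a d : is_ideal S op I -> I a -> PX d ->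
  lines d #<= lines a -> I d.
Proof.
move=> [IS Icl] Ia Pd da.
have : jprinc S op a d by rewrite (jprinc_PX c (IS _ Ia)).
case=> [->//|[[x [Px ->]]|[[x [Px ->]]|[x [y [Px [Py ->]]]]]]].
- exact: (Icl _ _ Ia Px).1.
- exact: (Icl _ _ Ia Px).2.
- exact: (Icl _ _ (Icl _ _ Ia Px).2 Py).1.
Qed.

(* a proper ideal is J_K for the least rank K of an element outside it *)
Lemma proper_ideal_rank_lt I b : is_ideal S op I -> PX b -> ~ I b ->
  exists K : set (set (pt X)), card_le_succ X K /\ I = [set a | PX a /\ rank_lt a K].
Proof.
move=> idI Pb nIb; pose F := [set K | exists b, [/\ PX b, ~ I b & K = lines b]].
have [K [b' [Pb' nIb' ->]] Kmin] := @ex_card_min _ F (ex_intro _ _ (ex_intro _ b (And3 Pb nIb erefl))).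
exists (lines b'); split.
  by move=> A _ Ab' _; apply: card_le_trans Ab' (card_lines_le_setT Pb').
apply/predeqP => a; split.
  move=> Ia; have Pa := idI.1 _ Ia; split => //.
  have nb'a : ~ (lines b' #<= lines a).
    by move=> b'a; apply/nIb'/(ideal_card_lines_closed idI Ia Pb').
  apply/andP; split; last exact/negP.
  by have [//|] := card_le_total (lines a) (lines b').
move=> [Pa /andP [_ /negP nb'a]]; apply: contrapT => nIa.
by apply/nb'a/Kmin; exists a.
Qed.

(* S itself is J_K for the least cardinal K exceeding |X| *)
Lemma PX_rank_lt_succ : exists K : set (set X), card_le_succ X K /\
  S = [set a | PX a /\ rank_lt a K].
Proof.
pose F := [set A : set (set X) | ~ (A #<= [set: X])].
have [K FK Kmin] := @ex_card_min _ F (ex_intro F _ (@Cantor_powerset X)).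
exists K; split.
  by move=> A _ AK /negP nKA; apply: contrapT => /Kmin.
apply/predeqP => a; split=> [Pa|[]//]; split => //; have aX := card_lines_le_setT Pa.
apply/andP; split; last by apply/negP => /card_le_trans /(_ aX).
by have [/(card_le_trans aX)|] := card_le_total [set: X] K.
Qed.

End Green.

Theorem mainTheorem2 (X : Type) (c : bool) :
  let S := @PX X in
  let op := PIop c in
  (forall a b, S a -> S b -> (GreenR S op a b <-> pdom a = pdom b)) /\
  (forall a b, S a -> S b -> (GreenL S op a b <-> pran a = pran b)) /\
  (forall a b, S a -> S b ->
     (GreenD S op a b <-> GreenJ S op a b) /\
     (GreenJ S op a b <-> lines a #= lines b)) /\
  (forall I, is_ideal S op I ->
     exists (T : Type) (K : set T),
       card_le_succ X K /\ I = [set a | S a /\ rank_lt a K]).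
Proof.
move=> S op; split; first exact: GreenR_PX.
split; first exact: GreenL_PX.
split.
  move=> a b Pa Pb; rewrite (GreenJ_PX c Pa Pb).
  by split => //; apply: GreenD_PX.
move=> I idI; have [[b [Pb nIb]]|IS] := pselect (exists b, PX b /\ ~ I b).
  by have [K ?] := proper_ideal_rank_lt idI Pb nIb; exists (set (pt X)), K.
have -> : I = S.
  apply/predeqP => a; split; first exact: idI.1.
  by move=> Pa; apply: contrapT => nIa; apply: IS; exists a.
by have [K ?] := PX_rank_lt_succ X; exists (set X), K.
Qed.
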